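(* Every bounded complex spectral family $E$ in a complete lattice $\mathbb{L}$ is decomposable, i.e. there are spectral families $E^1,E^2$ in $\mathbb{L}$ such that $E_{\lambda,\mu}=E^1_\lambda\wedge E^2_\mu$ for all $\lambda,\mu\in\mathbb{R}$.
   Context: $\mathbb{L}$ has least element $0$ and greatest element $1$. A (real) spectral family is a map $F:\mathbb{R}\to\mathbb{L}$ with $F_\lambda\le F_\mu$ for $\lambda\le\mu$, $F_\lambda=\bigwedge_{\mu>\lambda}F_\mu$, $\bigwedge_\lambda F_\lambda=0$, $\bigvee_\lambda F_\lambda=1$. A complex spectral family is a map $E:\mathbb{R}^2\to\mathbb{L}$ with (i) $E_{\lambda_1,\lambda_2}\wedge E_{\mu_1,\mu_2}=E_{\min\{\lambda_1,\mu_1\},\min\{\lambda_2,\mu_2\}}$; (ii) $\bigwedge_{\lambda_1<\mu_1,\lambda_2<\mu_2}E_{\mu_1,\mu_2}=E_{\lambda_1,\lambda_2}$; (iii) $\bigwedge_\lambda E_{\lambda,\lambda_2}=0=\bigwedge_\lambda E_{\lambda_1,\lambda}$ for all $\lambda_1,\lambda_2$, and $\bigvee_{\lambda_1,\lambda_2}E_{\lambda_1,\lambda_2}=1$. It is bounded if there are $m,b\in\mathbb{R}$ with $E_{\lambda_1,\lambda_2}=0$ whenever $\lambda_1\le m$ or $\lambda_2\le m$, and $E_{\lambda_1,\lambda_2}=1$ whenever $\lambda_1,\lambda_2\ge b$. *)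

From HB Require Import structures.
From mathcomp Require Import all_boot all_order all_algebra.
From mathcomp Require Import reals.
Set Implicit Arguments. Unset Strict Implicit. Unset Printing Implicit Defensive.
Import Order.TTheory GRing.Theory Num.Theory.
Local Open Scope ring_scope.

Section Bounds.
Context {d : Order.disp_t} {T : porderType d}.

Definition is_lbound (S : T -> Prop) (x : T) := forall y, S y -> (x <= y)%O.
Definition is_ubound (S : T -> Prop) (x : T) := forall y, S y -> (y <= x)%O.
Definition is_inf (S : T -> Prop) (x : T) :=
  is_lbound S x /\ forall z, is_lbound S z -> (z <= x)%O.
Definition is_sup (S : T -> Prop) (x : T) :=
  is_ubound S x /\ forall z, is_ubound S z -> (x <= z)%O.

Definition complete_lattice :=
  forall S : T -> Prop, (exists x, is_inf S x) /\ (exists x, is_sup S x).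
End Bounds.

Section Spectral.
Context {d : Order.disp_t} (L : tbLatticeType d) (R : realType).

Definition spectral_family (F : R -> L) : Prop :=
  [/\ (forall l m : R, l <= m -> (F l <= F m)%O),
      (forall l : R, is_inf (fun x => exists m : R, l < m /\ x = F m) (F l)),
      is_inf (fun x => exists l : R, x = F l) (\bot%O) &
      is_sup (fun x => exists l : R, x = F l) (\top%O)].

Definition complex_spectral_family (E : R -> R -> L) : Prop :=
  [/\ (forall l1 l2 m1 m2 : R,
         (E l1 l2 `&` E m1 m2)%O = E (Num.min l1 m1) (Num.min l2 m2)),
      (forall l1 l2 : R,
         is_inf (fun x => exists m1 m2 : R, [/\ l1 < m1, l2 < m2 & x = E m1 m2])
                (E l1 l2)),
      (forall l2 : R, is_inf (fun x => exists l : R, x = E l l2) (\bot%O)),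
      (forall l1 : R, is_inf (fun x => exists l : R, x = E l1 l) (\bot%O)) &
      is_sup (fun x => exists l1 l2 : R, x = E l1 l2) (\top%O)].

Definition bounded_csf (E : R -> R -> L) : Prop :=
  exists m b : R,
    (forall l1 l2 : R, l1 <= m \/ l2 <= m -> E l1 l2 = \bot%O) /\
    (forall l1 l2 : R, b <= l1 -> b <= l2 -> E l1 l2 = \top%O).

Definition decomposable (E : R -> R -> L) : Prop :=
  exists E1 E2 : R -> L,
    [/\ spectral_family E1, spectral_family E2 &
        forall l m : R, E l m = (E1 l `&` E2 m)%O].
End Spectral.

From HB Require Import structures.
From mathcomp Require Import all_boot all_order all_algebra.
From mathcomp Require Import reals.
Import Order.TTheory GRing.Theory Num.Theory.
Local Open Scope ring_scope.

(* Once b bounds the family, E(b, b) = 1, so the meet rule (i) gives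
   E(l, m) = E(l, b) /\ E(b, m).  The two slices E(., b) and E(b, .) are
   monotone, inherit right continuity from (ii) because E(m1, m2) lies above
   E(m1, b) when m2 > b (and above E(b, m2) when m1 > b), and they attain 0
   below the lower bound and 1 at b. *)

Lemma is_inf_dominated {d : Order.disp_t} {T : porderType d}
    (S S' : T -> Prop) (x : T) :
  is_inf S x -> is_lbound S' x ->
  (forall y, S y -> exists2 y', S' y' & (y' <= y)%O) -> is_inf S' x.
Proof.
move=> [_ x_glb] x_lb dom; split=> // z z_lb; apply: x_glb => y /dom [y' S'y' le_y'y].
exact: le_trans (z_lb _ S'y') le_y'y.
Qed.

Lemma is_inf_bottom {d : Order.disp_t} {T : bPOrderType d} (S : T -> Prop) :
  S \bot%O -> is_inf S \bot%O.
Proof. by move=> Sbot; split=> [y _|z]; [exact: le0x | apply]. Qed.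

Lemma is_sup_top {d : Order.disp_t} {T : tPOrderType d} (S : T -> Prop) :
  S \top%O -> is_sup S \top%O.
Proof. by move=> Stop; split=> [y _|z]; [exact: lex1 | apply]. Qed.

Lemma bounded_spectral_family {d : Order.disp_t} {L : tbLatticeType d}
    {R : realType} (F : R -> L) (m b : R) :
  (forall l1 l2 : R, l1 <= l2 -> (F l1 <= F l2)%O) ->
  (forall l : R, is_inf (fun x => exists l' : R, l < l' /\ x = F l') (F l)) ->
  F m = \bot%O -> F b = \top%O -> spectral_family F.
Proof.
move=> F_mono F_rc Fm Fb; split=> //.
- by apply: is_inf_bottom; exists m.
- by apply: is_sup_top; exists b.
Qed.

Section ComplexSpectralSlices.
Context {d : Order.disp_t} {L : tbLatticeType d} {R : realType}.
Context {E : R -> R -> L}.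
Hypothesis E_meet : forall l1 l2 m1 m2 : R,
  (E l1 l2 `&` E m1 m2)%O = E (Num.min l1 m1) (Num.min l2 m2).

Lemma csf_le (l1 l2 m1 m2 : R) :
  l1 <= m1 -> l2 <= m2 -> (E l1 l2 <= E m1 m2)%O.
Proof. by move=> le1 le2; apply/meet_idPl; rewrite E_meet (min_l le1) (min_l le2). Qed.

Lemma csf_meet_slices (b : R) : E b b = \top%O ->
  forall l1 l2 : R, E l1 l2 = (E l1 b `&` E b l2)%O.
Proof.
move=> Ebb l1 l2; rewrite E_meet [Num.min b l2]minC.
by rewrite -E_meet Ebb meetx1.
Qed.

Hypothesis E_rc : forall l1 l2 : R,
  is_inf (fun x => exists m1 m2 : R, [/\ l1 < m1, l2 < m2 & x = E m1 m2])
         (E l1 l2).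

Lemma csf_right_continuous_fst (b l : R) :
  is_inf (fun x => exists m : R, l < m /\ x = E m b) (E l b).
Proof.
apply: is_inf_dominated (E_rc l b) _ _.
  by move=> y [m [lm ->]]; apply: csf_le => //; exact: ltW.
move=> y [m1 [m2 [lm1 bm2 ->]]]; exists (E m1 b); first by exists m1.
by apply: csf_le => //; exact: ltW.
Qed.

Lemma csf_right_continuous_snd (b l : R) :
  is_inf (fun x => exists m : R, l < m /\ x = E b m) (E b l).
Proof.
apply: is_inf_dominated (E_rc b l) _ _.
  by move=> y [m [lm ->]]; apply: csf_le => //; exact: ltW.
move=> y [m1 [m2 [bm1 lm2 ->]]]; exists (E b m2); first by exists m2.
by apply: csf_le => //; exact: ltW.
Qed.

End ComplexSpectralSlices.

Theorem proposition2p20 (d : Order.disp_t) (L : tbLatticeType d) (R : realType) :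
  @complete_lattice d L ->
  forall E : R -> R -> L,
    complex_spectral_family E -> bounded_csf E -> decomposable E.
Proof.
move=> _ E [E_meet E_rc _ _ _] [m [b [E_bot E_top]]].
have Ebb : E b b = \top%O by exact: E_top.
have E_le := csf_le E_meet.
exists (E^~ b), (E b); split; last exact: csf_meet_slices E_meet b Ebb.
- apply: (bounded_spectral_family _ m b) => //.
  + by move=> l1 l2 le12; apply: E_le.
  + exact: csf_right_continuous_fst E_meet E_rc b.
  + by apply: E_bot; left.
- apply: (bounded_spectral_family _ m b) => //.
  + by move=> l1 l2 le12; apply: E_le.
  + exact: csf_right_continuous_snd E_meet E_rc b.
  + by apply: E_bot; right.
Qed.
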